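(* Let $N=n+m$ with $n,m\ge 2$, and let $f=x_0p_0+x_1p_1+\cdots+x_np_n+g\in K[x_0,\dots,x_n,u_1,\dots,u_m]_d$ define a Perazzo hypersurface $X=V(f)\subseteq\mathbb{P}^N$ of degree $d\ge 3$. If $X$ is a cone, then $X$ is projectively equivalent to a cone with vertex a point over a Perazzo hypersurface $Y\subseteq\mathbb{P}^{N-1}$ of degree $d$.
   Context: $K$ is an algebraically closed field of characteristic zero. A Perazzo hypersurface $X\subset\mathbb{P}^N$ ($N\ge 4$) of degree $d\ge 3$ is a hypersurface defined by a form $f\in K[x_0,\dots,x_n,u_1,\dots,u_m]$ of the form $f=x_0p_0+x_1p_1+\cdots+x_np_n+g$, where $n,m$ are integers with $n+m=N$, $n,m\ge 2$, the $p_i\in K[u_1,\dots,u_m]_{d-1}$ are algebraically dependent but linearly independent over $K$, and $g\in K[u_1,\dots,u_m]_d$. A hypersurface $V(f)$ is a cone if, after a linear change of the variables, $f$ does not involve one of the variables (equivalently, the partial derivatives of $f$ are linearly dependent). *)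

From HB Require Import structures.
From mathcomp Require Import all_boot all_order all_algebra.
From mathcomp Require Export mpoly.
Set Implicit Arguments. Unset Strict Implicit. Unset Printing Implicit Defensive.
Import Order.TTheory GRing.Theory.
Local Open Scope ring_scope.

Section Perazzo.
Variable K : fieldType.

(* p is a form (homogeneous polynomial) of degree d: every monomial of its
   support has total degree d (the zero polynomial is a form of every degree). *)
Definition is_form (k d : nat) (p : {mpoly K[k]}) : bool :=
  all (fun mo => mdeg mo == d) (msupp p).

Definition subst_mpoly (l k : nat) (q : 'I_l -> {mpoly K[k]}) (P : {mpoly K[l]})
  : {mpoly K[k]} := P \mPo [tuple q i | i < l].

Definition alg_dependent (l k : nat) (q : 'I_l -> {mpoly K[k]}) : Prop :=
  exists P : {mpoly K[l]}, P != 0 /\ subst_mpoly q P = 0.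

Definition lin_independent (l k : nat) (q : 'I_l -> {mpoly K[k]}) : Prop :=
  forall c : 'I_l -> K, \sum_(i < l) c i *: q i = 0 -> forall i, c i = 0.

(* Variables of K[x_0..x_n, u_1..u_m] = {mpoly K[n.+1 + m]}:
   x_i = 'X_(lshift m i)  (i : 'I_n.+1),  u_(j+1) = 'X_(rshift n.+1 j) (j : 'I_m). *)
Definition xvar (n m : nat) (i : 'I_n.+1) : {mpoly K[n.+1 + m]} := 'X_(lshift m i).
Definition uvar (n m : nat) (j : 'I_m) : {mpoly K[n.+1 + m]} := 'X_(rshift n.+1 j).

Definition u_embed (n m : nat) (q : {mpoly K[m]}) : {mpoly K[n.+1 + m]} :=
  subst_mpoly (@uvar n m) q.

Definition perazzo (n m d : nat) (f : {mpoly K[n.+1 + m]}) : Prop :=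
  [/\ (2 <= n)%N, (2 <= m)%N, (3 <= d)%N &
  exists (p : 'I_n.+1 -> {mpoly K[m]}) (g : {mpoly K[m]}),
    [/\ forall i, is_form d.-1 (p i),
        is_form d g,
        alg_dependent p,
        lin_independent p &
        f = \sum_(i < n.+1) xvar m i * u_embed n (p i) + u_embed n g]].

Definition lin_change (k : nat) (A : 'M[K]_k) (f : {mpoly K[k]}) : {mpoly K[k]} :=
  subst_mpoly (fun i => \sum_(j < k) A i j *: 'X_j) f.

Definition free_of_var (k : nat) (i : 'I_k) (f : {mpoly K[k]}) : bool :=
  all (fun mo : 'X_{1..k} => mo i == 0%N) (msupp f).

Definition is_cone (k : nat) (f : {mpoly K[k]}) : Prop :=
  exists (A : 'M[K]_k) (i : 'I_k), A \in unitmx /\ free_of_var i (lin_change A f).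

End Perazzo.
Arguments perazzo {K} n m d f.

From HB Require Import structures.
From mathcomp Require Import all_boot all_order all_algebra.
From mathcomp Require Import mpoly.
From mathcomp Require Import perm zify.
Set Implicit Arguments. Unset Strict Implicit. Unset Printing Implicit Defensive.
Import GRing.Theory.
Local Open Scope ring_scope.

(* Write f = x_0 p_0(u) + ... + x_n p_n(u) + g(u) and suppose f(A z) does not
   involve z_i0 for an invertible A.  Then f(z + t v) = f(z) identically, where
   v = A e_i0 = (a, b) is the vertex.  Comparing the coefficients of the
   x-variables gives p_i(u + t b) = p_i(u), and b <> 0: otherwise
   sum_i a_i p_i = 0 forces a = 0 by linear independence.  Choose an invertible
   B with last column b and put q_i(u') = p_i(B (u', 0)), g0(u') = g(B (u', 0)).
   In the coordinates given by the block matrix [[1, a e_last^T], [0, B]],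
   f becomes x_0 q_0 + ... + x_n q_n + g0, which no longer involves the last
   variable.  The q_i are forms, algebraically dependent, and still linearly
   independent because a b-invariant polynomial vanishing on the hyperplane
   B {u_last = 0} vanishes; this also forces m - 1 >= 2, since in at most one variable two
   forms of equal degree are proportional. *)

Section Substitution.
Variable K : fieldType.

Lemma subst_mpolyX l k (q : 'I_l -> {mpoly K[k]}) i : subst_mpoly q 'X_i = q i.
Proof. by rewrite /subst_mpoly comp_mpolyXU -tnth_nth tnth_mktuple. Qed.

Lemma subst_mpolyD l k (q : 'I_l -> {mpoly K[k]}) P Q :
  subst_mpoly q (P + Q) = subst_mpoly q P + subst_mpoly q Q.
Proof. exact: comp_mpolyD. Qed.

Lemma subst_mpolyM l k (q : 'I_l -> {mpoly K[k]}) P Q :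
  subst_mpoly q (P * Q) = subst_mpoly q P * subst_mpoly q Q.
Proof. by rewrite /subst_mpoly rmorphM. Qed.

Lemma subst_mpolyZ l k (q : 'I_l -> {mpoly K[k]}) c P :
  subst_mpoly q (c *: P) = c *: subst_mpoly q P.
Proof. exact: comp_mpolyZ. Qed.

Lemma subst_mpoly0 l k (q : 'I_l -> {mpoly K[k]}) : subst_mpoly q 0 = 0.
Proof. exact: comp_mpoly0. Qed.

Lemma subst_mpoly_sum l k (q : 'I_l -> {mpoly K[k]}) I (r : seq I) (P : pred I) F :
  subst_mpoly q (\sum_(i <- r | P i) F i) = \sum_(i <- r | P i) subst_mpoly q (F i).
Proof. by rewrite /subst_mpoly raddf_sum. Qed.

Lemma subst_mpoly_monomial l k (q : 'I_l -> {mpoly K[k]}) mo :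
  subst_mpoly q 'X_[mo] = \prod_(i < l) q i ^+ mo i.
Proof.
by rewrite /subst_mpoly comp_mpolyX; apply: eq_bigr => i _; rewrite tnth_mktuple.
Qed.

Lemma eq_subst_mpoly l k (q q' : 'I_l -> {mpoly K[k]}) P :
  q =1 q' -> subst_mpoly q P = subst_mpoly q' P.
Proof. by move=> eq_q; rewrite /subst_mpoly; congr comp_mpoly; apply: eq_mktuple. Qed.

Lemma subst_mpoly_id l (P : {mpoly K[l]}) : subst_mpoly (fun i => 'X_i) P = P.
Proof. exact: comp_mpoly_id. Qed.

Lemma subst_mpoly_comp l k j (q : 'I_l -> {mpoly K[k]}) (r : 'I_k -> {mpoly K[j]}) P :
  subst_mpoly r (subst_mpoly q P) = subst_mpoly (fun i => subst_mpoly r (q i)) P.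
Proof.
have P_expand := mpolyE P; set s := msupp P in P_expand; rewrite P_expand.
rewrite (subst_mpoly_sum q) (subst_mpoly_sum r) subst_mpoly_sum.
apply: eq_bigr => mo _; rewrite !subst_mpolyZ; congr (_ *: _).
rewrite !subst_mpoly_monomial /subst_mpoly rmorph_prod.
by apply: eq_bigr => i _; rewrite rmorphXn.
Qed.

Lemma subst_mpoly_free l k i (q q' : 'I_l -> {mpoly K[k]}) P :
  free_of_var i P -> (forall j, j != i -> q j = q' j) ->
  subst_mpoly q P = subst_mpoly q' P.
Proof.
move=> /allP P_free eq_q.
have P_expand := mpolyE P; set s := msupp P in P_expand P_free; rewrite P_expand.
rewrite !subst_mpoly_sum.
apply: eq_big_seq => mo /P_free /eqP mo_i; rewrite !subst_mpolyZ !subst_mpoly_monomial.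
congr (_ *: _); apply: eq_bigr => j _.
by case: (eqVneq j i) => [->|/eq_q ->//]; rewrite mo_i !expr0.
Qed.

Lemma subst_lin_change N (A : 'M[K]_N) f k (y : 'I_N -> {mpoly K[k]}) :
  subst_mpoly y (lin_change A f) = subst_mpoly (fun r => \sum_j A r j *: y j) f.
Proof.
rewrite /lin_change subst_mpoly_comp; apply: eq_subst_mpoly => r.
by rewrite subst_mpoly_sum; apply: eq_bigr => j _; rewrite subst_mpolyZ subst_mpolyX.
Qed.

Lemma is_form_subst l k e (q : 'I_l -> {mpoly K[k]}) P :
  is_form e P -> (forall i, is_form 1 (q i)) -> is_form e (subst_mpoly q P).
Proof.
move=> /allP P_form q_lin; rewrite /is_form -dhomogE /subst_mpoly comp_mpolyE.
rewrite big_seq; apply: rpred_sum => mo /P_form /eqP <-; apply: rpredZ.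
rewrite mdegE; elim: (index_enum _) => [|i s IHs]; first by rewrite !big_nil dhomog1.
rewrite !big_cons; apply: dhomogM => //; rewrite tnth_mktuple.
by have := dhomogMn (mo i) (q_lin i); rewrite mul1n.
Qed.

Lemma is_form_linear l (c : 'I_l -> K) : is_form 1 (\sum_(j < l) c j *: 'X_j).
Proof.
rewrite /is_form -dhomogE; apply: rpred_sum => j _; apply: rpredZ.
by rewrite (@dhomogX l K mdeg 1%N U_(j)); apply/eqP; exact: mdeg1.
Qed.

Lemma alg_dependent_subst l k j (q : 'I_l -> {mpoly K[k]}) (r : 'I_k -> {mpoly K[j]}) :
  alg_dependent q -> alg_dependent (fun i => subst_mpoly r (q i)).
Proof.
case=> P [P_nz P_rel]; exists P; split => //.
by rewrite -subst_mpoly_comp P_rel subst_mpoly0.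
Qed.

End Substitution.

Section LinearAlgebra.
Variable K : fieldType.

Lemma mulmx_invmx_comb N k (M : 'M[K]_N) (s : 'I_N -> {mpoly K[k]}) r :
  M \in unitmx -> \sum_j M r j *: (\sum_l invmx M j l *: s l) = s r.
Proof.
move=> M_unit; transitivity (\sum_l (M *m invmx M) r l *: s l).
  under eq_bigr do rewrite scaler_sumr.
  rewrite exchange_big /=; apply: eq_bigr => l _; rewrite mxE scaler_suml.
  by apply: eq_bigr => j _; rewrite scalerA.
rewrite mulmxV // (bigD1 r) //= mxE eqxx scale1r big1 ?addr0 // => l l_neq_r.
by rewrite mxE eq_sym (negbTE l_neq_r) scale0r.
Qed.

Lemma unitmx_with_last_col m (b : 'I_m.+1 -> K) l0 : b l0 != 0 ->
  exists B : 'M[K]_m.+1, B \in unitmx /\ forall k, B k ord_max = b k.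
Proof.
move=> b_l0; pose s := tperm l0 ord_max.
pose M : 'M[K]_m.+1 := \matrix_(i, j) if j == ord_max then b (s i) else (i == j)%:R.
exists (row_perm s M); split; last by move=> k; rewrite !mxE eqxx tpermK.
rewrite row_permE unitmx_mul unitmx_perm /= unitmxE -det_tr det_trig; last first.
  apply/is_trig_mxP => i j lt_ij; rewrite !mxE.
  have -> : (i == ord_max) = false.
    by apply/negbTE; apply: contraTneq lt_ij => ->; rewrite -leqNgt leq_ord.
  by rewrite -val_eqE /= (gtn_eqF lt_ij).
rewrite (bigD1 ord_max) //= big1 ?mulr1; last by move=> i /negbTE i_neq; rewrite !mxE i_neq eqxx.
by rewrite !mxE eqxx /s tpermR unitfE.
Qed.

Lemma unitmx_col_nonzero N (A : 'M[K]_N) i0 : A \in unitmx -> exists j, A j i0 != 0.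
Proof.
move=> A_unit; apply/existsP; apply: contraTT A_unit => /existsPn col_eq0.
rewrite unitmxE (expand_det_col _ i0) big1 ?unitr0 // => j _.
by have /negPn/eqP -> := col_eq0 j; rewrite mul0r.
Qed.

End LinearAlgebra.

Section FewVariables.
Variable K : fieldType.

Lemma mnm_le1_eq m (x y : 'X_{1..m}) : (m <= 1)%N -> mdeg x = mdeg y -> x = y.
Proof.
move=> m_le1 deg_eq; apply/mnmP => i; move: deg_eq.
have all_eq j : j = i by apply: ord_inj; have := ltn_ord i; have := ltn_ord j; lia.
by rewrite !mdegE !(big_pred1 i) // => j; rewrite (all_eq j) /= eqxx.
Qed.

Lemma forms_le1_proportional m e (P Q : {mpoly K[m]}) mo : (m <= 1)%N ->
  is_form e P -> is_form e Q -> mo \in msupp P -> Q@_mo *: P - P@_mo *: Q = 0.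
Proof.
move=> m_le1 /allP P_form /allP Q_form mo_P; apply/mpolyP => mo'.
rewrite mcoeffB !mcoeffZ mcoeff0.
case: (eqVneq mo' mo) => [->|mo'_neq]; first by rewrite mulrC subrr.
have coef0 R : is_form e R -> R@_mo' = 0.
  move=> /allP R_form; apply/eqP; rewrite -[_ == 0]negbK -mcoeff_msupp.
  apply/negP => /R_form /eqP deg_mo'; move/eqP: mo'_neq; apply; apply: mnm_le1_eq => //.
  by rewrite deg_mo'; apply/esym/eqP; exact: P_form.
by rewrite !coef0 ?mulr0 ?subrr //; apply/allP.
Qed.

Lemma no_lin_independent_forms m e n (q : 'I_n.+1 -> {mpoly K[m]}) :
  (m <= 1)%N -> (1 <= n)%N -> (forall i, is_form e (q i)) -> ~ lin_independent q.
Proof.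
move=> m_le1 n_ge1 q_form q_indep.
pose i0 : 'I_n.+1 := ord0; pose i1 : 'I_n.+1 := inord 1.
have i1_neq : i1 != i0 by rewrite -val_eqE /= inordK.
have q0_nz : q i0 != 0.
  apply/eqP => q0_eq0.
  have comb0 : \sum_i (i == i0)%:R *: q i = 0.
    rewrite (bigD1 i0) //= q0_eq0 scaler0 add0r big1 // => i /negbTE ->.
    by rewrite scale0r.
  by have /eqP := q_indep _ comb0 i0; rewrite eqxx oner_eq0.
have mo_q0 := mlead_supp q0_nz; set mo := mlead (q i0) in mo_q0.
pose c i := if i == i0 then (q i1)@_mo else if i == i1 then - (q i0)@_mo else 0.
have comb0 : \sum_i c i *: q i = 0.
  rewrite /c (bigD1 i0) //= (bigD1 i1) //= big1; last first.
    by move=> i /andP [/negbTE -> /negbTE ->]; rewrite scale0r.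
  rewrite (negbTE i1_neq) eqxx addr0 scaleNr.
  exact: forms_le1_proportional m_le1 (q_form i0) (q_form i1) mo_q0.
have /eqP := q_indep _ comb0 i1; rewrite /c (negbTE i1_neq) eqxx oppr_eq0.
by move: mo_q0; rewrite mcoeff_msupp => /negP.
Qed.

End FewVariables.

Section ConeVertex.
Variable K : fieldType.

(* f(z + t v) = f(z) identically: the point v lies in the vertex of V(f). *)
Definition translation_invariant N (f : {mpoly K[N]}) (v : 'I_N -> K) : Prop :=
  forall k (s : 'I_N -> {mpoly K[k]}) t,
    subst_mpoly (fun j => s j + v j *: t) f = subst_mpoly s f.

Lemma cone_translation_invariant N (f : {mpoly K[N]}) (A : 'M[K]_N) i0 :
  A \in unitmx -> free_of_var i0 (lin_change A f) ->
  translation_invariant f (fun j => A j i0).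
Proof.
move=> A_unit A_free k s t.
pose w r := \sum_j invmx A r j *: s j.
have A_w r : \sum_j A r j *: w j = s r by exact: mulmx_invmx_comb.
transitivity (subst_mpoly (fun j => w j + (j == i0)%:R *: t) (lin_change A f)).
  rewrite subst_lin_change; apply: eq_subst_mpoly => r.
  under [RHS]eq_bigr do rewrite scalerDr.
  rewrite big_split /= A_w (bigD1 i0) //= eqxx scale1r big1 ?addr0 // => j /negbTE ->.
  by rewrite scale0r scaler0.
rewrite (subst_mpoly_free A_free (q' := w)) => [|j /negbTE ->]; last by rewrite scale0r addr0.
by rewrite subst_lin_change; apply: eq_subst_mpoly => r; rewrite A_w.
Qed.

End ConeVertex.

Section PerazzoForm.
Variable K : fieldType.

Definition perazzo_form n m (p : 'I_n.+1 -> {mpoly K[m]}) (g : {mpoly K[m]})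
  : {mpoly K[n.+1 + m]} := \sum_(i < n.+1) xvar K m i * u_embed n (p i) + u_embed n g.

Definition join_vars T n m (x : 'I_n -> T) (y : 'I_m -> T) (j : 'I_(n + m)) : T :=
  match split j with inl i => x i | inr k => y k end.

Lemma join_vars_l T n m (x : 'I_n -> T) (y : 'I_m -> T) i : join_vars x y (lshift m i) = x i.
Proof. by rewrite /join_vars (unsplitK (inl _ i)). Qed.

Lemma join_vars_r T n m (x : 'I_n -> T) (y : 'I_m -> T) k : join_vars x y (rshift n k) = y k.
Proof. by rewrite /join_vars (unsplitK (inr _ k)). Qed.

Lemma subst_perazzo_form n m k (p : 'I_n.+1 -> {mpoly K[m]}) g
    (x : 'I_n.+1 -> {mpoly K[k]}) (y : 'I_m -> {mpoly K[k]}) :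
  subst_mpoly (join_vars x y) (perazzo_form p g)
    = \sum_i x i * subst_mpoly y (p i) + subst_mpoly y g.
Proof.
have subst_embed P : subst_mpoly (join_vars x y) (u_embed n P) = subst_mpoly y P.
  rewrite /u_embed subst_mpoly_comp; apply: eq_subst_mpoly => j.
  by rewrite subst_mpolyX join_vars_r.
rewrite subst_mpolyD subst_mpoly_sum subst_embed; congr (_ + _).
by apply: eq_bigr => i _; rewrite subst_mpolyM subst_mpolyX join_vars_l subst_embed.
Qed.

End PerazzoForm.

Section PerazzoVertex.
Variable K : fieldType.
Variables (n m : nat) (p : 'I_n.+1 -> {mpoly K[m]}) (g : {mpoly K[m]}).
Variable v : 'I_(n.+1 + m) -> K.
Hypothesis v_invariant : translation_invariant (perazzo_form p g) v.

Let a i := v (lshift m i).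
Let b k := v (rshift n.+1 k).

Lemma perazzo_translation k (x : 'I_n.+1 -> {mpoly K[k]}) (y : 'I_m -> {mpoly K[k]}) t :
  \sum_i (x i + a i *: t) * subst_mpoly (fun j => y j + b j *: t) (p i)
     + subst_mpoly (fun j => y j + b j *: t) g
  = \sum_i x i * subst_mpoly y (p i) + subst_mpoly y g.
Proof.
have shift_join : (fun j => join_vars x y j + v j *: t)
    =1 join_vars (fun i => x i + a i *: t) (fun j => y j + b j *: t).
  by move=> j; rewrite -(splitK j); case: (split j) => i; rewrite ?join_vars_l ?join_vars_r.
rewrite -!subst_perazzo_form -(eq_subst_mpoly _ shift_join).
exact: v_invariant.
Qed.

Lemma perazzo_translation_x0 k (y : 'I_m -> {mpoly K[k]}) t :
  \sum_i (a i *: t) * subst_mpoly (fun j => y j + b j *: t) (p i)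
     + subst_mpoly (fun j => y j + b j *: t) g = subst_mpoly y g.
Proof.
have := perazzo_translation (fun=> 0) y t.
rewrite [in RHS]big1 ?add0r => [<-|i _]; last exact: mul0r.
by under [in RHS]eq_bigr do rewrite add0r.
Qed.

Lemma vertex_fixes_p k (y : 'I_m -> {mpoly K[k]}) t i :
  subst_mpoly (fun j => y j + b j *: t) (p i) = subst_mpoly y (p i).
Proof.
have pick_i (F : 'I_n.+1 -> {mpoly K[k]}) : \sum_i' (i' == i)%:R * F i' = F i.
  by rewrite (bigD1 i) //= eqxx mul1r big1 ?addr0 // => j /negbTE ->; rewrite mul0r.
have := perazzo_translation (fun i' => (i' == i)%:R) y t.
under eq_bigr do rewrite mulrDl.
by rewrite big_split -addrA perazzo_translation_x0 => /addIr; rewrite !pick_i.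
Qed.

(* A nonzero vertex point of a Perazzo hypersurface lies outside {u = 0}:
   otherwise a_0 p_0 + ... + a_n p_n = 0 with a <> 0. *)
Lemma vertex_u_part_nonzero :
  lin_independent p -> (exists j, v j != 0) -> exists l0, b l0 != 0.
Proof.
move=> p_indep [j v_j]; apply/existsP; apply: contraNT v_j.
move=> /existsPn b_eq0; have {}b_eq0 k : b k = 0 by apply/eqP/negPn/b_eq0.
have comb0 : \sum_i a i *: p i = 0.
  have := perazzo_translation_x0 (fun j => 'X_j) 1.
  rewrite (eq_subst_mpoly (q' := fun j => 'X_j)) => [|l]; last by rewrite b_eq0 scale0r addr0.
  rewrite subst_mpoly_id => /(canRL (addrK _)); rewrite subrr => sum_eq0.
  rewrite -[RHS]sum_eq0; apply: eq_bigr => i _.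
  by rewrite vertex_fixes_p subst_mpoly_id -scalerAl mul1r.
have a_eq0 := p_indep a comb0.
by rewrite -(splitK j); case: (split j) => k; apply/eqP; [exact: a_eq0 | exact: b_eq0].
Qed.

End PerazzoVertex.

Section Reduction.
Variable K : fieldType.
Variables (n m : nat) (p : 'I_n.+1 -> {mpoly K[m.+1]}) (g : {mpoly K[m.+1]}).
Variable v : 'I_(n.+1 + m.+1) -> K.
Hypothesis v_invariant : translation_invariant (perazzo_form p g) v.
Variable B : 'M[K]_m.+1.
Hypothesis B_unit : B \in unitmx.
Hypothesis B_last : forall k, B k ord_max = v (rshift n.+1 k).

Let a i := v (lshift m.+1 i).
Let widen_u (j : 'I_m) : 'I_m.+1 := widen_ord (leqnSn m) j.

(* The linear map u' |-> B (u', 0) from the hyperplane complementary to the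
   vertex direction, and the restrictions of p and g along it. *)
Definition restrict_u (k : 'I_m.+1) : {mpoly K[m]} := \sum_(j < m) B k (widen_u j) *: 'X_j.
Definition reduced_p i : {mpoly K[m]} := subst_mpoly restrict_u (p i).
Definition reduced_g : {mpoly K[m]} := subst_mpoly restrict_u g.

(* The change of coordinates: identity on x, B on u, and x_i += a_i u_last. *)
Definition reduction_mx : 'M[K]_(n.+1 + m.+1) :=
  block_mx 1%:M (\matrix_(i, k) if k == ord_max then a i else 0) 0 B.

Lemma reduction_mx_unit : reduction_mx \in unitmx.
Proof. by rewrite unitmxE det_ublock det1 mul1r -unitmxE. Qed.

Lemma reduced_forms e : (forall i, is_form e (p i)) -> forall i, is_form e (reduced_p i).
Proof. by move=> p_form i; apply: is_form_subst => // k; exact: is_form_linear. Qed.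

Lemma reduced_g_form e : is_form e g -> is_form e reduced_g.
Proof. by move=> g_form; apply: is_form_subst => // k; exact: is_form_linear. Qed.

Lemma invariant_restrict_eq0 (P : {mpoly K[m.+1]}) :
  (forall k (y : 'I_m.+1 -> {mpoly K[k]}) t,
     subst_mpoly (fun j => y j + v (rshift n.+1 j) *: t) P = subst_mpoly y P) ->
  subst_mpoly restrict_u P = 0 -> P = 0.
Proof.
move=> P_inv P_restr.
pose y k : {mpoly K[m.+1]} := \sum_(j < m) B k (widen_u j) *: 'X_(widen_u j).
have B_split k : \sum_j B k j *: 'X_j = y k + v (rshift n.+1 k) *: 'X_ord_max.
  by rewrite big_ord_recr /= B_last.
have B_invertible : P = subst_mpoly (fun k => \sum_l invmx B k l *: 'X_l)
                          (subst_mpoly (fun k => \sum_j B k j *: 'X_j) P).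
  rewrite subst_mpoly_comp -[LHS]subst_mpoly_id; apply: eq_subst_mpoly => k.
  rewrite subst_mpoly_sum; under eq_bigr do rewrite subst_mpolyZ subst_mpolyX.
  by rewrite mulmx_invmx_comb.
have P_y : subst_mpoly y P = 0.
  rewrite -[RHS](subst_mpoly0 (fun j => 'X_(widen_u j))) -P_restr subst_mpoly_comp.
  apply: eq_subst_mpoly => k; rewrite subst_mpoly_sum; apply: eq_bigr => j _.
  by rewrite subst_mpolyZ subst_mpolyX.
by rewrite B_invertible (eq_subst_mpoly _ B_split) P_inv P_y subst_mpoly0.
Qed.

Lemma reduced_lin_independent : lin_independent p -> lin_independent reduced_p.
Proof.
move=> p_indep c comb0; apply: p_indep; apply: invariant_restrict_eq0.
  move=> k y t; rewrite !subst_mpoly_sum; apply: eq_bigr => i _.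
  by rewrite !subst_mpolyZ (vertex_fixes_p v_invariant).
by rewrite subst_mpoly_sum -[RHS]comb0; apply: eq_bigr => i _; rewrite subst_mpolyZ.
Qed.

Let embed_u' (j : 'I_m) : {mpoly K[n.+1 + m.+1]} := 'X_(rshift n.+1 (widen_u j)).
Let u_last : {mpoly K[n.+1 + m.+1]} := 'X_(rshift n.+1 ord_max).

Lemma reduction_mx_row_x i :
  \sum_j reduction_mx (lshift m.+1 i) j *: 'X_j = 'X_(lshift m.+1 i) + a i *: u_last.
Proof.
rewrite big_split_ord; congr (_ + _).
  under eq_bigr do rewrite block_mxEul.
  rewrite (bigD1 i) //= mxE eqxx scale1r big1 ?addr0 // => l l_neq_i.
  by rewrite mxE eq_sym (negbTE l_neq_i) scale0r.
under eq_bigr do rewrite block_mxEur.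
rewrite (bigD1 ord_max) //= mxE eqxx big1 ?addr0 // => k /negbTE k_neq.
by rewrite mxE k_neq scale0r.
Qed.

Lemma reduction_mx_row_u k :
  \sum_j reduction_mx (rshift n.+1 k) j *: 'X_j
    = subst_mpoly embed_u' (restrict_u k) + v (rshift n.+1 k) *: u_last.
Proof.
rewrite big_split_ord /= big1 ?add0r; last by move=> j _; rewrite block_mxEdl mxE scale0r.
under eq_bigr do rewrite block_mxEdr.
rewrite big_ord_recr B_last /restrict_u subst_mpoly_sum; congr (_ + _).
by apply: eq_bigr => j _; rewrite subst_mpolyZ subst_mpolyX.
Qed.

Lemma reduction_identity (e : (n.+1 + m).+1 = (n.+1 + m.+1)%N) :
  lin_change reduction_mx (perazzo_form p g) =
  subst_mpoly (fun j => 'X_(cast_ord e (widen_ord (leqnSn (n.+1 + m)) j)))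
    (perazzo_form reduced_p reduced_g).
Proof.
pose xs i : {mpoly K[n.+1 + m.+1]} := 'X_(lshift m.+1 i).
have rows : (fun r => \sum_j reduction_mx r j *: 'X_j) =1
    join_vars (fun i => xs i + a i *: u_last)
              (fun k => subst_mpoly embed_u' (restrict_u k) + v (rshift n.+1 k) *: u_last).
  move=> r; rewrite -(splitK r); case: (split r) => [i|k] /=.
    by rewrite join_vars_l reduction_mx_row_x.
  by rewrite join_vars_r reduction_mx_row_u.
have embedding : (fun j => 'X_(cast_ord e (widen_ord (leqnSn (n.+1 + m)) j))) =1
    join_vars xs embed_u'.
  move=> j; rewrite -(splitK j); case: (split j) => [i|k] /=.
    by rewrite join_vars_l (_ : cast_ord _ _ = lshift m.+1 i) //; apply: val_inj.
  by rewrite join_vars_r (_ : cast_ord _ _ = rshift n.+1 (widen_u k)) //; apply: val_inj.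
rewrite /lin_change (eq_subst_mpoly _ rows) subst_perazzo_form.
rewrite (perazzo_translation v_invariant) (eq_subst_mpoly _ embedding) subst_perazzo_form.
rewrite /reduced_g subst_mpoly_comp; congr (_ + _).
by apply: eq_bigr => i _; rewrite /reduced_p subst_mpoly_comp.
Qed.

End Reduction.

Theorem mainTheorem1 (K : closedFieldType) (hchar : [pchar K] =i pred0)
    (n m d : nat) (f : {mpoly K[n.+1 + m]}) :
  perazzo n m d f -> is_cone f ->
  exists (n' m' : nat) (e : (n'.+1 + m').+1 = (n.+1 + m)%N)
         (h : {mpoly K[n'.+1 + m']}) (A : 'M[K]_(n.+1 + m)) (c : K),
    [/\ perazzo n' m' d h, A \in unitmx, c != 0 &
        lin_change A f =
          c *: subst_mpoly (fun j => 'X_(cast_ord e (widen_ord (leqnSn _) j))) h].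
Proof.
case: m f => [|m] f [n_ge2 m_ge2 d_ge3 [p [g [p_form g_form p_dep p_indep ->]]]] //.
case=> A [i0 [A_unit A_free]].
have v_inv := cone_translation_invariant A_unit A_free.
have [l0 b_l0] := vertex_u_part_nonzero v_inv p_indep (unitmx_col_nonzero i0 A_unit).
have [B [B_unit B_last]] := unitmx_with_last_col (b := fun k => A (rshift n.+1 k) i0) b_l0.
have q_form := reduced_forms B p_form.
have q_indep := reduced_lin_independent v_inv B_unit B_last p_indep.
have m_gt1 : (1 < m)%N.
  rewrite ltnNge; apply/negP => m_le1.
  exact: no_lin_independent_forms m_le1 (ltnW n_ge2) q_form q_indep.
exists n, m, (esym (addnS _ _)), (perazzo_form (reduced_p p B) (reduced_g g B)).
exists (reduction_mx (fun j => A j i0) B), 1; split.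
- split => //; exists (reduced_p p B), (reduced_g g B); split => //.
  + exact: reduced_g_form.
  + exact: alg_dependent_subst.
- exact: reduction_mx_unit.
- exact: oner_neq0.
- rewrite scale1r; exact: reduction_identity.
Qed.
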